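(* Let $S$ be a semigroup and $a\in S$ an idempotent such that every element of $\{a\}\cup aSa$ has exactly one inverse in $S$. Then $\operatorname{Reg}(Sa)=P=aSa$, where $P=\{x\in Sa: x\,\mathscr L\,ax\}$, and this is an inverse monoid.
   Context: An inverse of $x\in S$ is $y\in S$ with $x=xyx$ and $y=yxy$. $\operatorname{Reg}(Sa)$ is the set of regular elements of the semigroup $Sa=\{xa:x\in S\}$; $aSa=\{axa:x\in S\}$. $\mathscr L$ is Green's $\mathscr L$-relation on $S$. A semigroup is inverse if every element has exactly one inverse in it. *)

Set Implicit Arguments.

Section Semigroup.
Variables (T : Type) (mul : T -> T -> T).

Definition is_inverse (x y : T) : Prop :=
  x = mul (mul x y) x /\ y = mul (mul y x) y.

Definition unique_inverse (x : T) : Prop :=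
  exists y, is_inverse x y /\ forall z, is_inverse x z -> z = y.

Definition Sa (a : T) (x : T) : Prop := exists s, x = mul s a.

Definition aSa (a : T) (x : T) : Prop := exists s, x = mul (mul a s) a.

(* Green's L relation on S: S^1 x = S^1 y *)
Definition GreenL (x y : T) : Prop :=
  (x = y \/ exists s, x = mul s y) /\ (y = x \/ exists t, y = mul t x).

Definition Reg (M : T -> Prop) (x : T) : Prop :=
  M x /\ exists y, M y /\ x = mul (mul x y) x.

Definition Pset (a : T) (x : T) : Prop := Sa a x /\ GreenL x (mul a x).

Definition is_inverse_monoid (M : T -> Prop) : Prop :=
  (forall x y, M x -> M y -> M (mul x y)) /\
  (exists e, M e /\ forall x, M x -> mul e x = x /\ mul x e = x) /\
  (forall x, M x -> exists y, M y /\ is_inverse x y /\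
                      forall z, M z -> is_inverse x z -> z = y).

End Semigroup.

(** For an idempotent [a], the set [aSa] is exactly the set of elements fixed
    by [a] on both sides, and any inverse [y] of such an element can be
    replaced by the inverse [aya]; uniqueness of inverses therefore keeps them
    inside [aSa], which makes [aSa] an inverse monoid with identity [a].
    Regular elements of [Sa] are [L]-related to their left [a]-translates, and
    conversely an element [x] of [P] coincides with [z = ax]: both [x] and [z]
    are inverses of the unique inverse of [z]. *)

From Stdlib Require Import Setoid.

Set Implicit Arguments.

Section IdempotentCorner.

Variables (T : Type) (mul : T -> T -> T).
Hypothesis mul_assoc : forall x y z, mul x (mul y z) = mul (mul x y) z.
Variables (a : T).
Hypothesis a_idem : mul a a = a.

Local Notation "x * y" := (mul x y).

Lemma aSa_fixed (x : T) : aSa mul a x <-> a * x = x /\ x * a = x.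
Proof.
  split.
  - intros [s ->]. split.
    + rewrite !mul_assoc, a_idem. reflexivity.
    + rewrite <- mul_assoc, a_idem. reflexivity.
  - intros [Hax Hxa]. exists x. rewrite Hax, Hxa. reflexivity.
Qed.

Lemma aSa_Sa (x : T) : aSa mul a x -> Sa mul a x.
Proof. intros [s Hs]. exists (a * s). exact Hs. Qed.

Lemma aSa_mul (x y : T) : aSa mul a x -> aSa mul a y -> aSa mul a (x * y).
Proof.
  rewrite !aSa_fixed. intros [Hax _] [_ Hya]. split.
  - rewrite mul_assoc, Hax. reflexivity.
  - rewrite <- mul_assoc, Hya. reflexivity.
Qed.

Lemma aSa_a : aSa mul a a.
Proof. apply aSa_fixed. split; exact a_idem. Qed.

Lemma is_inverse_sandwich (x y : T) :
  aSa mul a x -> is_inverse mul x y -> is_inverse mul x (a * y * a).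
Proof.
  rewrite aSa_fixed. intros [Hax Hxa] [Hxyx Hyxy].
  assert (Lax : forall u, u * a * x = u * x).
  { intros u. rewrite <- mul_assoc, Hax. reflexivity. }
  assert (Lxa : forall u, u * x * a = u * x).
  { intros u. rewrite <- mul_assoc, Hxa. reflexivity. }
  assert (Lyxy : forall u, u * y * x * y = u * y).
  { intros u. rewrite <- !mul_assoc, (mul_assoc y x y), <- Hyxy. reflexivity. }
  split.
  - rewrite !mul_assoc, Hxa, Lax. exact Hxyx.
  - rewrite !mul_assoc, Lax, Lxa, Lyxy. reflexivity.
Qed.

Lemma unique_inverse_aSa (x : T) :
  aSa mul a x -> unique_inverse mul x ->
  exists y, aSa mul a y /\ is_inverse mul x y /\
            forall z, is_inverse mul x z -> z = y.
Proof.
  intros Hx [y [Hy Hu]]. exists y. split; [|split; assumption].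
  exists y. symmetry. apply Hu, is_inverse_sandwich; assumption.
Qed.

Lemma Reg_Sa_Pset (x : T) : Reg mul (Sa mul a) x -> Pset mul a x.
Proof.
  intros [Hx [y [[s Hs] Hxyx]]]. split; [exact Hx|]. split.
  - right. exists (x * s).
    rewrite mul_assoc, <- (mul_assoc x s a), <- Hs. exact Hxyx.
  - right. exists a. reflexivity.
Qed.

Lemma aSa_Pset (x : T) : aSa mul a x -> Pset mul a x.
Proof.
  intros Hx. split; [apply aSa_Sa; exact Hx|].
  apply aSa_fixed in Hx as [Hax _]. split; left; [symmetry|]; exact Hax.
Qed.

Hypothesis aSa_unique_inverse : forall x, aSa mul a x -> unique_inverse mul x.

Lemma aSa_Reg_Sa (x : T) : aSa mul a x -> Reg mul (Sa mul a) x.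
Proof.
  intros Hx.
  destruct (unique_inverse_aSa Hx (aSa_unique_inverse Hx))
    as [y [Hy [[Hxyx _] _]]].
  split; [apply aSa_Sa; exact Hx|].
  exists y. split; [apply aSa_Sa; exact Hy | exact Hxyx].
Qed.

Lemma Pset_aSa (x : T) : Pset mul a x -> aSa mul a x.
Proof.
  intros [[s Hs] [[Hx_ax | [t Hx_tax]] _]].
  { apply aSa_fixed. split; [symmetry; exact Hx_ax|].
    rewrite Hs, <- mul_assoc, a_idem. reflexivity. }
  assert (Hxa : x * a = x) by (rewrite Hs, <- mul_assoc, a_idem; reflexivity).
  assert (Hz : aSa mul a (a * x)).
  { apply aSa_fixed. split.
    - rewrite mul_assoc, a_idem. reflexivity.
    - rewrite <- mul_assoc, Hxa. reflexivity. }
  remember (a * x) as z eqn:Hz_ax.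
  destruct (unique_inverse_aSa Hz (aSa_unique_inverse Hz))
    as [z' [Hz' [[Hzz'z Hz'zz'] _]]].
  assert (Hz'x : z' * x = z' * z).
  { apply aSa_fixed in Hz' as [_ Hz'a].
    rewrite Hz_ax, mul_assoc, Hz'a. reflexivity. }
  (* [x] and [z] are both inverses of [z'], since [x = t z] and [z z' z = z]. *)
  assert (Iz : is_inverse mul z' z) by (split; assumption).
  assert (Ix : is_inverse mul z' x).
  { split.
    - rewrite Hz'x. exact Hz'zz'.
    - rewrite <- mul_assoc, Hz'x, mul_assoc.
      rewrite Hx_tax at 2.
      rewrite <- (mul_assoc (t * z) z' z), <- mul_assoc, (mul_assoc z z' z),
        <- Hzz'z.
      exact Hx_tax. }
  destruct (aSa_unique_inverse Hz') as [w [_ Hw]].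
  replace x with z by (rewrite (Hw _ Ix), (Hw _ Iz); reflexivity).
  exact Hz.
Qed.

Lemma aSa_inverse_monoid : is_inverse_monoid mul (aSa mul a).
Proof.
  split; [|split].
  - exact aSa_mul.
  - exists a. split; [exact aSa_a|]. intros x Hx. apply aSa_fixed. exact Hx.
  - intros x Hx.
    destruct (unique_inverse_aSa Hx (aSa_unique_inverse Hx)) as [y [Hy [Hi Hu]]].
    exists y. split; [exact Hy|]. split; [exact Hi|].
    intros z _ Hz. exact (Hu z Hz).
Qed.

End IdempotentCorner.

Theorem theorem3p33 (T : Type) (mul : T -> T -> T)
  (mul_assoc : forall x y z, mul x (mul y z) = mul (mul x y) z)
  (a : T) (a_idem : mul a a = a)
  (huniq : forall x, (x = a \/ aSa mul a x) -> unique_inverse mul x) :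
  (forall x, Reg mul (Sa mul a) x <-> Pset mul a x) /\
  (forall x, Pset mul a x <-> aSa mul a x) /\
  is_inverse_monoid mul (aSa mul a).
Proof.
  (* The disjunct [x = a] of [huniq] is redundant: [a = a a a] lies in [aSa]. *)
  assert (huniq_aSa : forall x, aSa mul a x -> unique_inverse mul x)
    by (intros x Hx; apply huniq; right; exact Hx).
  assert (HPaSa : forall x, Pset mul a x <-> aSa mul a x).
  { intros x. split.
    - apply Pset_aSa; assumption.
    - apply aSa_Pset; assumption. }
  split; [|split; [exact HPaSa|]].
  - intros x. split.
    + apply Reg_Sa_Pset; assumption.
    + intros Hx. apply HPaSa in Hx. apply aSa_Reg_Sa; assumption.
  - apply aSa_inverse_monoid; assumption.
Qed.
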